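(* Let $M=\frac32-\sqrt2$. For real $f_2,f_3,y_2,y_3$ put $\hat A=1+(1-f_2)(1-y_2)+2(1-f_3)(1-y_3)$ and $\hat F_1=1/\hat A$, and define $$\hat\alpha(f_2,f_3,y_2,y_3)=\frac{1}{(\frac12-\hat F_1)\hat A}\Bigl((1-f_2)\,y_2(\tfrac12-y_2)+2Mf_2(1-\hat A)+2(1-f_3)\,y_3(\tfrac12-y_3)+4Mf_2(1-y_3)\Bigr).$$ Then for all $f_2,f_3,y_2,y_3\in[0,\frac12]$ satisfying $f_2+2f_3=1$, $\frac1{13}\le f_2\le\frac12$ and $0\le y_2,y_3\le\frac{6}{13}$, we have $\hat\alpha(f_2,f_3,y_2,y_3)\le\frac{9231}{10000}$.
   Context: In the paper's notation, with $\Phi(x)=\frac{1}{x(\frac12-x)}$, one has $y(\frac12-y)=1/\Phi(y)$ and $\frac{1}{(\frac12-\hat F_1)\hat A}=\frac{\Phi(\hat F_1)\hat F_1}{\hat A}$. Under the hypotheses $\hat A>2$, so $\hat\alpha$ is well defined. *)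

From Stdlib Require Import Reals Lra.
Open Scope R_scope.

Definition M : R := 3/2 - sqrt 2.

Definition Ahat (f2 f3 y2 y3 : R) : R :=
  1 + (1 - f2) * (1 - y2) + 2 * (1 - f3) * (1 - y3).

Definition F1hat (f2 f3 y2 y3 : R) : R := 1 / Ahat f2 f3 y2 y3.

Definition alphahat (f2 f3 y2 y3 : R) : R :=
  let A := Ahat f2 f3 y2 y3 in
  let F1 := F1hat f2 f3 y2 y3 in
  1 / ((1/2 - F1) * A) *
  ((1 - f2) * y2 * (1/2 - y2) + 2 * M * f2 * (1 - A)
   + 2 * (1 - f3) * y3 * (1/2 - y3) + 4 * M * f2 * (1 - y3)).

(* With f3 = (1 - f2)/2 the denominator of alphahat is A/2 - 1, so the claim is the polynomial
   inequality 2 N <= c (A - 2) for the numerator N and c = 9231/10000.  Expanded around the corner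
   y2 = y3 = 6/13, where A - 2 = 1/13 and alphahat = 12/13 whatever f2 is, the gap c (A - 2) - 2 N is
   a constant (c - 12/13)/13, linear terms in 6/13 - y2 and 6/13 - y3, and two squares; all are
   nonnegative once M is known to lie in [0, 1/10]. *)

From Stdlib Require Import Reals Lra Psatz.
Open Scope R_scope.

Definition alpha_num (f2 f3 y2 y3 : R) : R :=
  (1 - f2) * y2 * (1/2 - y2) + 2 * M * f2 * (1 - Ahat f2 f3 y2 y3)
  + 2 * (1 - f3) * y3 * (1/2 - y3) + 4 * M * f2 * (1 - y3).

Lemma M_bounds : 0 <= M <= 1/10.
Proof.
  unfold M.
  assert (sqrt2_sq := sqrt_sqrt 2 ltac:(lra)).
  assert (sqrt2_pos := sqrt_pos 2).
  split; nra.
Qed.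

Lemma M_term_le (f : R) :
  0 <= f <= 1 -> 4 * M * f * (1 - f) <= (1 + f) * (9231/10000 - 11/13).
Proof.
  intros Hf. destruct M_bounds as [M_ge0 M_le].
  assert (M * (f * (1 - f)) <= 1/10 * (f * (1 - f))) by (apply Rmult_le_compat_r; nra).
  (* the remaining quadratic is 4/10 (f - 2/5)^2 plus a term linear and positive on [0, 1] *)
  assert (0 <= (f - 2/5) ^ 2) by apply pow2_ge_0.
  lra.
Qed.

Lemma Ahat_gt_2 (f2 f3 y2 y3 : R) :
  f2 + 2 * f3 = 1 -> -1 <= f2 <= 1 -> y2 <= 6/13 -> y3 <= 6/13 ->
  2 < Ahat f2 f3 y2 y3.
Proof. intros Hs Hf Hy2 Hy3. unfold Ahat. nra. Qed.

Lemma alphahat_eq (f2 f3 y2 y3 : R) :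
  2 < Ahat f2 f3 y2 y3 ->
  alphahat f2 f3 y2 y3 = 2 * alpha_num f2 f3 y2 y3 / (Ahat f2 f3 y2 y3 - 2).
Proof.
  intros HA. unfold alphahat, F1hat, alpha_num.
  set (A := Ahat f2 f3 y2 y3) in *.
  field. lra.
Qed.

Lemma alpha_num_gap (c f2 f3 p q : R) :
  f2 + 2 * f3 = 1 ->
  c * (Ahat f2 f3 (6/13 - p) (6/13 - q) - 2) - 2 * alpha_num f2 f3 (6/13 - p) (6/13 - q) =
  (c - 12/13) / 13
  + p * ((1 - f2) * (c - 11/13) + 4 * M * f2 * (1 - f2))
  + q * ((1 + f2) * (c - 11/13) - 4 * M * f2 * (1 - f2))
  + 2 * (1 - f2) * p ^ 2 + 2 * (1 + f2) * q ^ 2.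
Proof.
  intros Hs.
  replace f3 with ((1 - f2) / 2) by lra.
  unfold alpha_num, Ahat. field.
Qed.

Lemma alpha_num_le (c f2 f3 y2 y3 : R) :
  12/13 <= c -> 0 <= f2 <= 1 -> 4 * M * f2 * (1 - f2) <= (1 + f2) * (c - 11/13) ->
  f2 + 2 * f3 = 1 -> y2 <= 6/13 -> y3 <= 6/13 ->
  2 * alpha_num f2 f3 y2 y3 <= c * (Ahat f2 f3 y2 y3 - 2).
Proof.
  intros Hc Hf HMq Hs Hy2 Hy3.
  destruct M_bounds as [M_ge0 _].
  set (p := 6/13 - y2). set (q := 6/13 - y3).
  assert (gap := alpha_num_gap c f2 f3 p q Hs).
  replace (6/13 - p) with y2 in gap by (unfold p; ring).
  replace (6/13 - q) with y3 in gap by (unfold q; ring).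
  assert (0 <= p * ((1 - f2) * (c - 11/13) + 4 * M * f2 * (1 - f2))).
  { assert (0 <= M * f2 * (1 - f2)) by (repeat apply Rmult_le_pos; lra).
    apply Rmult_le_pos; [unfold p; lra | nra]. }
  assert (0 <= q * ((1 + f2) * (c - 11/13) - 4 * M * f2 * (1 - f2))).
  { apply Rmult_le_pos; [unfold q; lra | lra]. }
  assert (0 <= 2 * (1 - f2) * p ^ 2) by (apply Rmult_le_pos; [lra | apply pow2_ge_0]).
  assert (0 <= 2 * (1 + f2) * q ^ 2) by (apply Rmult_le_pos; [lra | apply pow2_ge_0]).
  lra.
Qed.

Lemma alphahat_le (c f2 f3 y2 y3 : R) :
  12/13 <= c -> 0 <= f2 <= 1 -> 4 * M * f2 * (1 - f2) <= (1 + f2) * (c - 11/13) ->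
  f2 + 2 * f3 = 1 -> y2 <= 6/13 -> y3 <= 6/13 ->
  alphahat f2 f3 y2 y3 <= c.
Proof.
  intros Hc Hf HMq Hs Hy2 Hy3.
  assert (HA := Ahat_gt_2 f2 f3 y2 y3 Hs ltac:(lra) Hy2 Hy3).
  assert (Hnum := alpha_num_le c f2 f3 y2 y3 Hc Hf HMq Hs Hy2 Hy3).
  rewrite alphahat_eq by exact HA.
  assert (c - 2 * alpha_num f2 f3 y2 y3 / (Ahat f2 f3 y2 y3 - 2)
          = (c * (Ahat f2 f3 y2 y3 - 2) - 2 * alpha_num f2 f3 y2 y3) / (Ahat f2 f3 y2 y3 - 2))
    as Hdiff by (field; lra).
  assert (0 <= (c * (Ahat f2 f3 y2 y3 - 2) - 2 * alpha_num f2 f3 y2 y3) / (Ahat f2 f3 y2 y3 - 2)).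
  { apply Rle_mult_inv_pos; lra. }
  lra.
Qed.

Theorem lemma24 (f2 f3 y2 y3 : R) :
  0 <= f2 <= 1/2 -> 0 <= f3 <= 1/2 -> 0 <= y2 <= 1/2 -> 0 <= y3 <= 1/2 ->
  f2 + 2 * f3 = 1 ->
  1/13 <= f2 <= 1/2 ->
  0 <= y2 <= 6/13 -> 0 <= y3 <= 6/13 ->
  alphahat f2 f3 y2 y3 <= 9231/10000.
Proof.
  intros Hf2 _ _ _ Hs _ Hy2 Hy3.
  apply alphahat_le; [lra | lra | | exact Hs | lra | lra].
  apply M_term_le. lra.
Qed.
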